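(* Let $\{n_k\}_{k\ge1}\subset\mathbb{Z}^+$ and $\{c_k\}_{k\ge1}\subset\mathbb{R}^+$ satisfy $n_k\ge 2$ and $n_kc_k<1$ for all $k\ge1$, let $I\subset\mathbb{R}$ be a nonempty closed interval, and let $E\in\mathcal{M}(I,\{n_k\},\{c_k\})$ be a homogeneous Moran set. If $\sup_{k\ge1}n_k<+\infty$, then $$\dim_A E=\limsup_{l\to+\infty}\ \sup_{k\ge1}\ \frac{\log (n_{k+1}\cdots n_{k+l})}{-\log (c_{k+1}\cdots c_{k+l})}.$$
   Context: Words: $\Omega_0=\{\emptyset\}$, $\Omega_k=\{\sigma_1\cdots\sigma_k:1\le\sigma_j\le n_j\}$, $\Omega=\bigcup_{k\ge0}\Omega_k$; for $\sigma\in\Omega_{k-1}$ and $1\le i\le n_k$, $\sigma*i\in\Omega_k$ denotes concatenation. A collection $\{I_\sigma:\sigma\in\Omega\}$ of closed intervals is a homogeneous Moran structure if $I_\emptyset=I$; for each $k\ge1$ and $\sigma\in\Omega_{k-1}$, the intervals $I_{\sigma*1},\dots,I_{\sigma*n_k}$ are contained in $I_\sigma$ and have pairwise disjoint interiors; and $|I_{\sigma*i}|/|I_\sigma|=c_k$ for all such $\sigma,i$ ($|\cdot|$ = diameter). The set $E=\bigcap_{k\ge1}\bigcup_{\sigma\in\Omega_k}I_\sigma$ is a homogeneous Moran set, and $\mathcal{M}(I,\{n_k\},\{c_k\})$ is the class of all such sets. For $F\subset\mathbb{R}$, $N_r(A)$ is the smallest number of balls of radius $r$ covering $A$, and the Assouad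 dimension is $\dim_A F=\inf\{s\ge0:\exists\, b,c>0\ \forall\, 0<r<R<b,\ \forall x\in F,\ N_r(B(x,R)\cap F)\le c(R/r)^s\}$. *)

From Stdlib Require Import Reals List.
From Coquelicot Require Import Coquelicot.
Import ListNotations.
Open Scope R_scope.

Definition cball (x r : R) : R -> Prop := fun y => Rabs (y - x) <= r.

(** N_r(A): the smallest number of balls of radius r covering A
    (+oo if no finite cover exists). *)
Definition covered_by (r : R) (A : R -> Prop) (cs : list R) : Prop :=
  forall y, A y -> exists z, In z cs /\ cball z r y.

Definition covering_number (r : R) (A : R -> Prop) : Rbar :=
  Glb_Rbar (fun m => exists cs : list R, covered_by r A cs /\ m = INR (length cs)).

Definition assouad_dim (F : R -> Prop) : Rbar :=
  Glb_Rbar (fun s => 0 <= s /\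
    exists b c : R, 0 < b /\ 0 < c /\
      forall (r R0 x : R), 0 < r -> r < R0 -> R0 < b -> F x ->
        Rbar_le (covering_number r (fun y => cball x R0 y /\ F y))
                (Finite (c * Rpower (R0 / r) s))).

(** Words: sigma = sigma_1 ... sigma_k is the list [sigma_1; ...; sigma_k],
    with 1 <= sigma_j <= n_j; sigma * i = sigma ++ [i]. *)
Definition word_in (n : nat -> nat) (k : nat) (w : list nat) : Prop :=
  length w = k /\
  forall j, (j < k)%nat -> (1 <= nth j w 0%nat <= n (S j))%nat.

(** A homogeneous Moran structure: I_sigma = [lo sigma, hi sigma]. *)
Definition homogeneous_moran_structure (a b : R) (n : nat -> nat) (c : nat -> R)
    (lo hi : list nat -> R) : Prop :=
  (forall w, lo w <= hi w) /\
  lo [] = a /\ hi [] = b /\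
  (forall k w, (1 <= k)%nat -> word_in n (k - 1) w ->
     (forall i, (1 <= i <= n k)%nat ->
        lo w <= lo (w ++ [i]) /\ hi (w ++ [i]) <= hi w /\
        hi (w ++ [i]) - lo (w ++ [i]) = c k * (hi w - lo w)) /\
     (forall i j, (1 <= i <= n k)%nat -> (1 <= j <= n k)%nat -> i <> j ->
        ~ (exists x, lo (w ++ [i]) < x < hi (w ++ [i]) /\
                     lo (w ++ [j]) < x < hi (w ++ [j])))).

Definition moran_set (n : nat -> nat) (lo hi : list nat -> R) : R -> Prop :=
  fun x => forall k, (1 <= k)%nat ->
    exists w, word_in n k w /\ lo w <= x <= hi w.

Definition in_moran_class (a b : R) (n : nat -> nat) (c : nat -> R)
    (E : R -> Prop) : Prop :=
  exists lo hi, homogeneous_moran_structure a b n c lo hi /\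
    forall x, E x <-> moran_set n lo hi x.

Fixpoint prod_n (n : nat -> nat) (k l : nat) : nat :=
  match l with O => 1%nat | S l' => (prod_n n k l' * n (k + l))%nat end.
Fixpoint prod_c (c : nat -> R) (k l : nat) : R :=
  match l with O => 1 | S l' => prod_c c k l' * c (k + l)%nat end.

Definition ratio (n : nat -> nat) (c : nat -> R) (k l : nat) : R :=
  ln (INR (prod_n n k l)) / (- ln (prod_c c k l)).

(** limsup_{l -> oo} sup_{k >= 1} ratio k l  (limsup of an Rbar sequence
    = inf_L sup_{l >= L}). *)
Definition moran_formula (n : nat -> nat) (c : nat -> R) : Rbar :=
  Inf_seq (fun L => Sup_seq (fun m =>
    Sup_seq (fun j => Finite (ratio n c (S j) (L + m)%nat)))).

(* Write delta_k = |I| c_1...c_k for the common length of the level-k basic intervals. Distinct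
   intervals of one level have disjoint interiors, so a ball of radius rho meets at most two of
   them when 2 rho < delta_k and at most three when rho < delta_k; and each of them meets E.

   Upper bound: for r < R choose K, j with delta_{K+1} <= R < delta_K and
   delta_{K+j+1} <= r < delta_{K+j}. Then B(x,R) cap E lies in at most three level-K intervals,
   each a union of n_{K+1}...n_{K+j+1} intervals of length at most r, so
   N_r <= 3 M^2 n_{K+2}...n_{K+j}. The middle window is at most
   (c_{K+2}...c_{K+j})^-s = (delta_{K+1} / delta_{K+j})^s <= (R/r)^s once its ratio is below s,
   and at most M^L when it is shorter than L.

   Lower bound: if x lies in a level-k interval and r = delta_{k+l} / 3, each of the
   n_{k+1}...n_{k+l} level-(k+l) subintervals contains a point of B(x, delta_k) cap E and an
   r-ball meets at most two of them, so n_{k+1}...n_{k+l} <= 2 N_r <= 2 C (3 / c_{k+1}...c_{k+l})^s.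
   Taking logarithms and using c_i <= 1/2 bounds the ratio by s + O(1/l). *)

From Stdlib Require Import Reals List Lra Lia Classical ClassicalEpsilon.
From Coquelicot Require Import Coquelicot.
Import ListNotations.
Open Scope R_scope.

(** * Extended reals and covering numbers *)

Lemma Rbar_le_of_forall_lt (x y : Rbar) :
  (forall s : R, Rbar_lt y s -> Rbar_le x s) -> Rbar_le x y.
Proof.
  intros H. destruct y as [t| |]; [|now destruct x|].
  - destruct x as [u| |]; simpl; [| |exact I].
    + destruct (Rle_dec u t) as [Hle|Hlt]; [exact Hle|].
      specialize (H ((u + t) / 2)). simpl in H. lra.
    + exact (H (t + 1) ltac:(simpl; lra)).
  - destruct x as [u| |]; simpl; [| |exact I].
    + specialize (H (u - 1) I). simpl in H. lra.
    + exact (H 0 I).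
Qed.

Lemma Glb_Rbar_le_of_forall_lt (P : R -> Prop) (y : Rbar) :
  (forall s : R, Rbar_lt y s -> P s) -> Rbar_le (Glb_Rbar P) y.
Proof.
  intros H. apply Rbar_le_of_forall_lt. intros s Hs.
  apply (proj1 (Glb_Rbar_correct P)), H, Hs.
Qed.

Lemma le_Glb_Rbar (P : R -> Prop) (y : Rbar) :
  (forall s, P s -> Rbar_le y s) -> Rbar_le y (Glb_Rbar P).
Proof. apply (proj2 (Glb_Rbar_correct P)). Qed.

Lemma Sup_seq_lub (u : nat -> Rbar) (y : Rbar) :
  (forall k, Rbar_le (u k) y) -> Rbar_le (Sup_seq u) y.
Proof.
  intros H. rewrite Rbar_sup_eq_lub. unfold Rbar_lub.
  destruct (Rbar_ex_lub _) as [l [Hub Hl]]. apply Hl. intros x [k ->]. apply H.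
Qed.

Lemma Inf_seq_lb (u : nat -> Rbar) k : Rbar_le (Inf_seq u) (u k).
Proof.
  rewrite Inf_eq_glb. unfold Rbar_glb.
  destruct (Rbar_ex_glb _) as [l [Hl Hlb]]. apply Hl. exists k; reflexivity.
Qed.

Lemma Inf_seq_glb (u : nat -> Rbar) (y : Rbar) :
  (forall k, Rbar_le y (u k)) -> Rbar_le y (Inf_seq u).
Proof.
  intros H. rewrite Inf_eq_glb. unfold Rbar_glb.
  destruct (Rbar_ex_glb _) as [l [Hlb Hl]]. apply Hl. intros x [k ->]. apply H.
Qed.

Lemma Rpower_pos x y : 0 < Rpower x y.
Proof. apply exp_pos. Qed.

Lemma Rpower_1_l s : Rpower 1 s = 1.
Proof. unfold Rpower. rewrite ln_1, Rmult_0_r. apply exp_0. Qed.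

Lemma ln_2_pos : 0 < ln 2.
Proof. rewrite <- ln_1. apply ln_increasing; lra. Qed.

Lemma c_le_half (m : nat) (x : R) : (2 <= m)%nat -> 0 < x -> INR m * x < 1 -> x <= / 2.
Proof. intros Hm Hx Hmx. apply le_INR in Hm. simpl in Hm. nra. Qed.

Lemma cball_iff x r y : cball x r y <-> x - r <= y <= x + r.
Proof. unfold cball, Rabs. destruct (Rcase_abs (y - x)); split; intros; lra. Qed.

Lemma covering_number_le r A cs :
  covered_by r A cs -> Rbar_le (covering_number r A) (INR (length cs)).
Proof. intros Hcs. apply (proj1 (Glb_Rbar_correct _)). now exists cs. Qed.

Lemma covering_number_ge r A (v : R) :
  (forall cs, covered_by r A cs -> v <= INR (length cs)) -> Rbar_le v (covering_number r A).
Proof.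
  intros H. apply (proj2 (Glb_Rbar_correct _)). intros m (cs & Hcs & ->). exact (H cs Hcs).
Qed.

Definition assouad_bound (F : R -> Prop) (b C s : R) : Prop :=
  forall r R0 x, 0 < r -> r < R0 -> R0 < b -> F x ->
    Rbar_le (covering_number r (fun y => cball x R0 y /\ F y)) (Finite (C * Rpower (R0 / r) s)).

Definition assouad_admissible (F : R -> Prop) (s : R) : Prop :=
  0 <= s /\ exists b C, 0 < b /\ 0 < C /\ assouad_bound F b C s.

Lemma assouad_dim_admissible F : assouad_dim F = Glb_Rbar (assouad_admissible F).
Proof. reflexivity. Qed.

Definition separated (d l l' : R) : Prop := l + d <= l' \/ l' + d <= l.

Lemma disjoint_open_intervals lo1 hi1 lo2 hi2 : lo1 < hi1 -> lo2 < hi2 ->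
  ~ (exists x, lo1 < x < hi1 /\ lo2 < x < hi2) -> hi1 <= lo2 \/ hi2 <= lo1.
Proof.
  intros H1 H2 H. destruct (Rle_dec hi1 lo2); [now left|].
  destruct (Rle_dec hi2 lo1); [now right|]. exfalso; apply H.
  exists ((Rmax lo1 lo2 + Rmin hi1 hi2) / 2).
  unfold Rmax, Rmin. destruct (Rle_dec lo1 lo2), (Rle_dec hi1 hi2); lra.
Qed.

Lemma three_separated_not_in_ball l1 l2 l3 y1 y2 y3 x d rho :
  2 * rho < d ->
  l1 <= y1 <= l1 + d -> l2 <= y2 <= l2 + d -> l3 <= y3 <= l3 + d ->
  cball x rho y1 -> cball x rho y2 -> cball x rho y3 ->
  separated d l1 l2 -> separated d l1 l3 -> separated d l2 l3 -> False.
Proof.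
  rewrite !cball_iff. unfold separated. intros. intuition lra.
Qed.

Lemma four_separated_not_in_ball l1 l2 l3 l4 y1 y2 y3 y4 x d rho :
  rho < d ->
  l1 <= y1 <= l1 + d -> l2 <= y2 <= l2 + d -> l3 <= y3 <= l3 + d -> l4 <= y4 <= l4 + d ->
  cball x rho y1 -> cball x rho y2 -> cball x rho y3 -> cball x rho y4 ->
  separated d l1 l2 -> separated d l1 l3 -> separated d l1 l4 ->
  separated d l2 l3 -> separated d l2 l4 -> separated d l3 l4 -> False.
Proof.
  rewrite !cball_iff. unfold separated. intros. intuition lra.
Qed.

(** * Counting and words *)

Lemma NoDup_length_le_2 {A : Type} (Q : list A) : NoDup Q ->
  (forall v1 v2 v3, In v1 Q -> In v2 Q -> In v3 Q -> v1 <> v2 -> v1 <> v3 -> v2 <> v3 -> False) ->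
  (length Q <= 2)%nat.
Proof.
  intros HQ H. destruct Q as [|v1 [|v2 [|v3 Q]]]; simpl; try lia. exfalso.
  inversion HQ as [|? ? H1 HQ2]; subst. inversion HQ2 as [|? ? H2 _]; subst.
  apply (H v1 v2 v3); simpl; auto; intro; subst; simpl in *; tauto.
Qed.

Lemma NoDup_length_le_3 {A : Type} (Q : list A) : NoDup Q ->
  (forall v1 v2 v3 v4, In v1 Q -> In v2 Q -> In v3 Q -> In v4 Q ->
     v1 <> v2 -> v1 <> v3 -> v1 <> v4 -> v2 <> v3 -> v2 <> v4 -> v3 <> v4 -> False) ->
  (length Q <= 3)%nat.
Proof.
  intros HQ H. destruct Q as [|v1 [|v2 [|v3 [|v4 Q]]]]; simpl; try lia. exfalso.
  inversion HQ as [|? ? H1 HQ2]; subst. inversion HQ2 as [|? ? H2 HQ3]; subst.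
  inversion HQ3 as [|? ? H3 _]; subst.
  apply (H v1 v2 v3 v4); simpl; auto 6; intro; subst; simpl in *; tauto.
Qed.

Lemma length_le_mul_of_cover {A B : Type} (Rel : B -> A -> Prop) (m : nat) (cs : list B) :
  forall P : list A, NoDup P ->
  (forall v, In v P -> exists z, In z cs /\ Rel z v) ->
  (forall z Q, NoDup Q -> incl Q P -> (forall v, In v Q -> Rel z v) -> (length Q <= m)%nat) ->
  (length P <= m * length cs)%nat.
Proof.
  induction cs as [|z0 cs IH]; intros P HP Hcov Hm.
  - destruct P as [|v P]; simpl; [lia|].
    destruct (Hcov v (or_introl eq_refl)) as (z & [] & _).
  - set (f := fun v => if excluded_middle_informative (Rel z0 v) then true else false).
    assert (Hf : forall v, f v = true <-> Rel z0 v).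
    { intros v. unfold f. destruct (excluded_middle_informative _); split; easy. }
    assert (Hz0 : (length (filter f P) <= m)%nat).
    { apply (Hm z0).
      - apply NoDup_filter, HP.
      - apply incl_filter.
      - intros v Hv. apply filter_In in Hv as [_ Hv]. apply Hf, Hv. }
    assert (Hrest : (length (filter (fun v => negb (f v)) P) <= m * length cs)%nat).
    { apply IH.
      - apply NoDup_filter, HP.
      - intros v Hv. apply filter_In in Hv as [Hv Hfv].
        destruct (Hcov v Hv) as (z & [<- | Hz] & Hzv).
        + apply Hf in Hzv. rewrite Hzv in Hfv. discriminate.
        + now exists z.
      - intros z Q HQ HQP HQz. apply (Hm z Q HQ); [|exact HQz].
        intros v Hv. apply (incl_filter (fun v => negb (f v)) P), HQP, Hv. }
    rewrite <- (filter_length f P). simpl. lia.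
Qed.

Lemma flat_map_length_const {A B : Type} (f : A -> list B) (l : list A) m :
  (forall x, In x l -> length (f x) = m) -> length (flat_map f l) = (length l * m)%nat.
Proof.
  induction l as [|x l IH]; intros H; simpl; [reflexivity|].
  rewrite length_app, H, IH by (auto with datatypes). lia.
Qed.

Lemma NoDup_flat_map {A B : Type} (f : A -> list B) (l : list A) :
  NoDup l -> (forall x, In x l -> NoDup (f x)) ->
  (forall x y z, In x l -> In y l -> x <> y -> In z (f x) -> In z (f y) -> False) ->
  NoDup (flat_map f l).
Proof.
  induction l as [|x l IH]; intros Hl Hf Hd; simpl; [constructor|].
  inversion Hl; subst. apply NoDup_app.
  - apply Hf; left; reflexivity.
  - apply IH; auto with datatypes.
    intros x0 y z Hx Hy; apply Hd; right; assumption.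
  - intros z Hz Hz'. apply in_flat_map in Hz' as (y & Hy & Hz').
    apply (Hd x y z); auto with datatypes. intros ->; contradiction.
Qed.

Lemma firstn_snoc {A : Type} k (w : list A) i :
  (k <= length w)%nat -> firstn k (w ++ [i]) = firstn k w.
Proof.
  intros Hk. rewrite firstn_app. replace (k - length w)%nat with 0%nat by lia.
  apply app_nil_r.
Qed.

Lemma word_in_nil n : word_in n 0 [].
Proof. split; [reflexivity | intros; lia]. Qed.

Lemma word_in_0_nil n w : word_in n 0 w -> w = [].
Proof. intros [H _]. now destruct w. Qed.

Lemma word_in_length n k w : word_in n k w -> length w = k.
Proof. now intros [H _]. Qed.

Lemma word_in_snoc n k w i :
  word_in n (S k) (w ++ [i]) <-> word_in n k w /\ (1 <= i <= n (S k))%nat.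
Proof.
  unfold word_in. rewrite length_app. simpl. split.
  - intros [Hl Hj]. assert (length w = k) as <- by lia. split; [split|].
    + reflexivity.
    + intros j Hj'. specialize (Hj j ltac:(lia)). now rewrite app_nth1 in Hj by lia.
    + specialize (Hj (length w) ltac:(lia)). now rewrite nth_middle in Hj.
  - intros [[<- Hj] Hi]. split; [lia|]. intros j Hj'.
    destruct (Nat.eq_dec j (length w)) as [->|Hne].
    + now rewrite nth_middle.
    + rewrite app_nth1 by lia. apply Hj. lia.
Qed.

Lemma word_in_S_inv n k w : word_in n (S k) w ->
  exists w' i, w = w' ++ [i] /\ word_in n k w' /\ (1 <= i <= n (S k))%nat.
Proof.
  intros H. destruct w as [|x w0] using rev_ind.
  - destruct H as [H _]. discriminate.
  - exists w0, x. split; [reflexivity|]. now apply word_in_snoc.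
Qed.

Lemma word_in_firstn n k j w : word_in n (k + j) w -> word_in n k (firstn k w).
Proof.
  intros [Hl Hj]. split.
  - rewrite length_firstn. lia.
  - intros t Ht. rewrite nth_firstn. destruct (Nat.ltb_spec t k); [|lia]. apply Hj. lia.
Qed.

Lemma repeat_S_snoc {A : Type} (x : A) m : repeat x (S m) = repeat x m ++ [x].
Proof. induction m as [|m IH]; simpl; [reflexivity|]. simpl in IH. now rewrite IH. Qed.

Lemma word_in_repeat_1 n k w m : (forall k, (1 <= k)%nat -> (1 <= n k)%nat) ->
  word_in n k w -> word_in n (k + m) (w ++ repeat 1%nat m).
Proof.
  intros Hn Hw. induction m as [|m IH].
  - now rewrite app_nil_r, Nat.add_0_r.
  - rewrite repeat_S_snoc, app_assoc, Nat.add_succ_r. apply word_in_snoc.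
    split; [exact IH|]. specialize (Hn (S (k + m)) ltac:(lia)). lia.
Qed.

Fixpoint descendants (n : nat -> nat) (u : list nat) (k j : nat) : list (list nat) :=
  match j with
  | O => [u]
  | S j' =>
      flat_map (fun w => map (fun i => w ++ [i]) (seq 1 (n (S (k + j'))))) (descendants n u k j')
  end.

Lemma length_descendants n u k j : length (descendants n u k j) = prod_n n k j.
Proof.
  induction j as [|j IH]; simpl; [reflexivity|].
  rewrite (flat_map_length_const _ _ (n (S (k + j)))).
  - rewrite IH, Nat.add_succ_r. reflexivity.
  - intros. now rewrite length_map, length_seq.
Qed.

Lemma NoDup_descendants n u k j : NoDup (descendants n u k j).
Proof.
  induction j as [|j IH]; simpl.
  - constructor; [intros []|constructor].
  - apply NoDup_flat_map; [exact IH| |].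
    + intros w _. apply NoDup_map_inv with (f := fun l => last l 0%nat).
      rewrite map_map, (map_ext _ (fun i => i)) by (intros; apply last_last).
      rewrite map_id. apply seq_NoDup.
    + intros x y z _ _ Hxy Hx Hy. apply in_map_iff in Hx as (i & <- & _).
      apply in_map_iff in Hy as (i' & Heq & _). apply app_inj_tail in Heq as [-> _]. congruence.
Qed.

Lemma in_descendants n u k j w : word_in n k u -> In w (descendants n u k j) ->
  word_in n (k + j) w /\ firstn k w = u.
Proof.
  intros Hu. revert w. induction j as [|j IH]; intros w Hw; simpl in Hw.
  - destruct Hw as [<-|[]]. rewrite Nat.add_0_r. split; [exact Hu|].
    apply firstn_all2. rewrite (word_in_length _ _ _ Hu). lia.
  - apply in_flat_map in Hw as (w' & Hw' & Hw). apply in_map_iff in Hw as (i & <- & Hi).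
    apply in_seq in Hi. destruct (IH w' Hw') as [H1 H2]. split.
    + rewrite Nat.add_succ_r. apply word_in_snoc. split; [exact H1|lia].
    + rewrite firstn_snoc; [exact H2|]. rewrite (word_in_length _ _ _ H1). lia.
Qed.

Lemma descendants_complete n k j w : word_in n (k + j) w -> In w (descendants n (firstn k w) k j).
Proof.
  revert w. induction j as [|j IH]; intros w Hw; simpl.
  - left. apply firstn_all2. rewrite (word_in_length _ _ _ Hw). lia.
  - rewrite Nat.add_succ_r in Hw. destruct (word_in_S_inv _ _ _ Hw) as (w' & i & -> & Hw' & Hi).
    apply in_flat_map. exists w'. split.
    + rewrite firstn_snoc by (rewrite (word_in_length _ _ _ Hw'); lia). apply IH, Hw'.
    + apply in_map_iff. exists i. split; [reflexivity|]. apply in_seq. lia.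
Qed.

Lemma in_descendants_nil n k w : In w (descendants n [] 0 k) <-> word_in n k w.
Proof.
  split.
  - intros Hw. apply (in_descendants n [] 0 k w (word_in_nil n) Hw).
  - intros Hw. apply (descendants_complete n 0 k w Hw).
Qed.

Lemma prod_c_add c k d l : prod_c c k (d + l) = prod_c c k d * prod_c c (k + d) l.
Proof.
  induction l as [|l IH]; simpl.
  - rewrite Nat.add_0_r. ring.
  - rewrite Nat.add_succ_r. simpl. rewrite IH.
    replace (k + S (d + l))%nat with (k + d + S l)%nat by lia. ring.
Qed.

Lemma prod_n_add n k d l : prod_n n k (d + l) = (prod_n n k d * prod_n n (k + d) l)%nat.
Proof.
  induction l as [|l IH]; simpl.
  - rewrite Nat.add_0_r. lia.
  - rewrite Nat.add_succ_r. simpl. rewrite IH.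
    replace (k + S (d + l))%nat with (k + d + S l)%nat by lia. lia.
Qed.

Lemma prod_n_1 n k : prod_n n k 1 = n (S k).
Proof. simpl. rewrite Nat.add_1_r. lia. Qed.

Lemma moran_formula_le_of_eventually n c (s : R) :
  (forall eps, 0 < eps -> exists L, forall k l, (1 <= k)%nat -> (L <= l)%nat ->
     ratio n c k l <= s + eps) ->
  Rbar_le (moran_formula n c) s.
Proof.
  intros H. apply Rbar_le_of_forall_lt. intros t Ht. simpl in Ht.
  destruct (H (t - s)) as [L HL]; [lra|].
  eapply Rbar_le_trans; [apply (Inf_seq_lb _ L)|].
  apply Sup_seq_lub. intros m. apply Sup_seq_lub. intros j. simpl.
  replace t with (s + (t - s)) by ring. apply HL; lia.
Qed.

Lemma ratio_lt_of_moran_formula_lt n c (s : R) : Rbar_lt (moran_formula n c) s ->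
  exists L, forall k l, (1 <= k)%nat -> (L <= l)%nat -> ratio n c k l < s.
Proof.
  intros Hs.
  destruct (classic (exists L, Rbar_lt (Sup_seq (fun m =>
    Sup_seq (fun j => Finite (ratio n c (S j) (L + m))))) s)) as [[L HL]|Hno].
  - exists L. intros k l Hk Hl.
    assert (Hle : Rbar_le (ratio n c k l)
      (Sup_seq (fun m => Sup_seq (fun j => Finite (ratio n c (S j) (L + m)))))).
    { apply Sup_seq_minor_le with (l - L)%nat.
      replace (L + (l - L))%nat with l by lia.
      apply Sup_seq_minor_le with (k - 1)%nat.
      replace (S (k - 1)) with k by lia. apply Rle_refl. }
    exact (Rbar_le_lt_trans _ _ _ Hle HL).
  - exfalso. apply (Rbar_lt_not_le _ _ Hs). apply Inf_seq_glb. intros L.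
    apply Rbar_not_lt_le. intros HL. apply Hno. now exists L.
Qed.

(** * Homogeneous Moran structures *)

Definition basic_length (a b : R) (c : nat -> R) (k : nat) : R := (b - a) * prod_c c 0 k.

Section HomogeneousMoran.

Variables (n : nat -> nat) (c : nat -> R) (M : nat).
Hypothesis Hn : forall k, (1 <= k)%nat -> (1 <= n k)%nat.
Hypothesis HM : forall k, (1 <= k)%nat -> (n k <= M)%nat.
Hypothesis Hc : forall k, (1 <= k)%nat -> 0 < c k.
Hypothesis Hc_half : forall k, (1 <= k)%nat -> c k <= / 2.

Lemma M_ge_1 : (1 <= M)%nat.
Proof. specialize (Hn 1%nat ltac:(lia)). specialize (HM 1%nat ltac:(lia)). lia. Qed.

Lemma pow_M_ge_1 L : (1 <= M ^ L)%nat.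
Proof. rewrite <- (Nat.pow_1_l L). apply Nat.pow_le_mono_l, M_ge_1. Qed.

Lemma prod_n_ge_1 k l : (1 <= prod_n n k l)%nat.
Proof.
  induction l as [|l IH]; simpl; [lia|].
  specialize (Hn (k + S l)%nat ltac:(lia)). nia.
Qed.

Lemma prod_n_le_pow k l : (prod_n n k l <= M ^ l)%nat.
Proof.
  induction l as [|l IH]; simpl; [lia|].
  specialize (HM (k + S l)%nat ltac:(lia)). rewrite Nat.mul_comm. now apply Nat.mul_le_mono.
Qed.

Lemma prod_c_pos k l : 0 < prod_c c k l.
Proof.
  induction l as [|l IH]; simpl; [lra|].
  apply Rmult_lt_0_compat; [exact IH | apply Hc; lia].
Qed.

Lemma prod_c_le_pow k l : prod_c c k l <= (/ 2) ^ l.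
Proof.
  induction l as [|l IH]; simpl; [lra|].
  pose proof (prod_c_pos k l). specialize (Hc_half (k + S l)%nat ltac:(lia)).
  rewrite Rmult_comm. apply Rmult_le_compat; try lra. apply Rlt_le, Hc. lia.
Qed.

Lemma prod_c_le_1 k l : prod_c c k l <= 1.
Proof.
  induction l as [|l IH]; simpl; [lra|].
  pose proof (prod_c_pos k l). specialize (Hc_half (k + S l)%nat ltac:(lia)).
  rewrite <- (Rmult_1_r 1). apply Rmult_le_compat; try lra. apply Rlt_le, Hc. lia.
Qed.

Lemma neg_ln_prod_c_ge k l : INR l * ln 2 <= - ln (prod_c c k l).
Proof.
  pose proof (prod_c_pos k l) as Hq.
  pose proof (ln_le _ _ Hq (prod_c_le_pow k l)) as Hln.
  rewrite ln_pow, ln_Rinv in Hln by lra. lra.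
Qed.

Lemma ratio_nonneg k l : 0 <= ratio n c k l.
Proof.
  unfold ratio. pose proof (prod_c_pos k l). pose proof (prod_c_le_1 k l).
  assert (ln (prod_c c k l) <= 0) by (rewrite <- ln_1; apply ln_le; lra).
  assert (Hp : 1 <= INR (prod_n n k l)) by apply (le_INR 1), prod_n_ge_1.
  assert (0 <= ln (INR (prod_n n k l))) by (rewrite <- ln_1; apply ln_le; lra).
  destruct (Req_dec (ln (prod_c c k l)) 0) as [Heq|Hne].
  - rewrite Heq, Ropp_0. unfold Rdiv. rewrite Rinv_0, Rmult_0_r. lra.
  - apply Rdiv_le_0_compat; lra.
Qed.

Lemma prod_n_le_of_ratio_lt k l s : ratio n c k l < s ->
  INR (prod_n n k l) <= Rpower (/ prod_c c k l) s.
Proof.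
  intros Hr. destruct l as [|l].
  - simpl. rewrite Rinv_1, Rpower_1_l. lra.
  - pose proof (prod_c_pos k (S l)). pose proof ln_2_pos.
    pose proof (neg_ln_prod_c_ge k (S l)). pose proof (lt_0_INR (S l) ltac:(lia)).
    assert (HD : 0 < - ln (prod_c c k (S l))) by nra.
    assert (Hp : 1 <= INR (prod_n n k (S l))) by apply (le_INR 1), prod_n_ge_1.
    unfold ratio in Hr. apply Rlt_div_l in Hr; [|lra].
    unfold Rpower. rewrite ln_Rinv by lra. rewrite <- (exp_ln (INR _)) by lra.
    apply Rlt_le, exp_increasing. lra.
Qed.

Lemma prod_n_le_of_ratio_eventually_lt k L s : 0 <= s ->
  (forall l, (L <= l)%nat -> ratio n c k l < s) ->
  forall l, INR (prod_n n k l) <= INR (M ^ L) * Rpower (/ prod_c c k l) s.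
Proof.
  intros Hs HL l. pose proof (prod_c_pos k l) as Hq. pose proof (prod_c_le_1 k l).
  assert (HML : 1 <= INR (M ^ L)) by apply (le_INR 1), pow_M_ge_1.
  assert (Hpow : 1 <= Rpower (/ prod_c c k l) s).
  { rewrite <- (Rpower_O (/ prod_c c k l)) by (apply Rinv_0_lt_compat; lra).
    apply Rle_Rpower; [|exact Hs]. rewrite <- Rinv_1. apply Rinv_le_contravar; lra. }
  destruct (Nat.le_gt_cases L l) as [Hl|Hl].
  - apply (Rle_trans _ _ _ (prod_n_le_of_ratio_lt k l s (HL l Hl))).
    rewrite <- (Rmult_1_l (Rpower _ s)) at 1. apply Rmult_le_compat_r; [|exact HML].
    apply Rlt_le, Rpower_pos.
  - apply Rle_trans with (INR (M ^ L)); [|nra].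
    apply le_INR, (Nat.le_trans _ _ _ (prod_n_le_pow k l)), Nat.pow_le_mono_r;
      [pose proof M_ge_1|]; lia.
Qed.

Lemma ratio_eventually_le_of_prod_n_le K C s eps : 0 < C -> 0 < eps ->
  (forall k l, (1 <= k)%nat -> (K <= l)%nat ->
     INR (prod_n n k l) <= C * Rpower (/ prod_c c k l) s) ->
  exists L, forall k l, (1 <= k)%nat -> (L <= l)%nat -> ratio n c k l <= s + eps.
Proof.
  intros HC Heps Hprod. pose proof ln_2_pos.
  destruct (INR_archimed (eps * ln 2) (ln C) ltac:(nra)) as [N HN].
  exists (Nat.max (S N) K). intros k l Hk Hl.
  specialize (Hprod k l Hk ltac:(lia)).
  pose proof (prod_c_pos k l). pose proof (neg_ln_prod_c_ge k l).
  assert (Hp : 1 <= INR (prod_n n k l)) by apply (le_INR 1), prod_n_ge_1.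
  assert (HNl : INR N <= INR l) by (apply le_INR; lia).
  assert (HD : 0 < - ln (prod_c c k l)).
  { pose proof (lt_0_INR l ltac:(lia)). nra. }
  assert (Hln : ln (INR (prod_n n k l)) <= ln C + s * - ln (prod_c c k l)).
  { apply ln_le in Hprod; [|lra].
    rewrite ln_mult, ln_Rpower, ln_Rinv in Hprod by (try apply Rpower_pos; lra). lra. }
  assert (HlnC : ln C <= eps * - ln (prod_c c k l)).
  { apply Rle_trans with (INR l * (eps * ln 2)).
    - apply Rlt_le, (Rlt_le_trans _ _ _ HN), Rmult_le_compat_r; nra.
    - replace (INR l * (eps * ln 2)) with (eps * (INR l * ln 2)) by ring.
      apply Rmult_le_compat_l; lra. }
  unfold ratio. apply Rle_div_l; [lra|]. lra.
Qed.

Variables (a b : R) (lo hi : list nat -> R).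
Hypothesis Hmoran : homogeneous_moran_structure a b n c lo hi.
Hypothesis Hab : a < b.

Local Notation delta := (basic_length a b c).

Lemma basic_length_add k l : delta (k + l) = delta k * prod_c c k l.
Proof. unfold basic_length. rewrite (prod_c_add c 0 k l). simpl. ring. Qed.

Lemma basic_length_pos k : 0 < delta k.
Proof. apply Rmult_lt_0_compat; [lra | apply prod_c_pos]. Qed.

Lemma basic_length_le_add k l : delta (k + l) <= delta k.
Proof.
  rewrite basic_length_add. pose proof (basic_length_pos k).
  pose proof (prod_c_pos k l). pose proof (prod_c_le_1 k l). nra.
Qed.

Lemma basic_length_eventually_le rho : 0 < rho -> exists m, delta m <= rho.
Proof.
  intros Hrho.
  destruct (pow_lt_1_zero (/ 2) ltac:(rewrite Rabs_pos_eq; lra) (rho / (b - a))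
    ltac:(apply Rdiv_lt_0_compat; lra)) as [m Hm].
  exists m. specialize (Hm m (le_n m)). rewrite Rabs_pos_eq in Hm by (apply pow_le; lra).
  apply Rlt_le, Rle_lt_trans with ((b - a) * (/ 2) ^ m).
  - apply Rmult_le_compat_l; [lra | apply prod_c_le_pow].
  - apply Rlt_div_r in Hm; lra.
Qed.

Lemma basic_length_bracket k rho : 0 < rho -> rho < delta k ->
  exists j, rho < delta (k + j) /\ delta (k + S j) <= rho.
Proof.
  intros Hrho Hk. destruct (basic_length_eventually_le rho Hrho) as [m Hm].
  assert (Hkm : delta (k + m) <= rho).
  { rewrite Nat.add_comm. exact (Rle_trans _ _ _ (basic_length_le_add m k) Hm). }
  clear Hm. induction m as [|m IH].
  - rewrite Nat.add_0_r in Hkm. lra.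
  - destruct (Rle_dec (delta (k + m)) rho) as [Hle|Hlt]; [exact (IH Hle)|].
    exists m. split; [lra | exact Hkm].
Qed.

Lemma moran_child k w i : word_in n k w -> (1 <= i <= n (S k))%nat ->
  lo w <= lo (w ++ [i]) /\ hi (w ++ [i]) <= hi w /\
  hi (w ++ [i]) - lo (w ++ [i]) = c (S k) * (hi w - lo w).
Proof.
  destruct Hmoran as (_ & _ & _ & Hch). intros Hw Hi.
  apply (Hch (S k) w ltac:(lia)); [|exact Hi]. now rewrite Nat.sub_1_r.
Qed.

Lemma moran_children_disjoint k w i j : word_in n k w ->
  (1 <= i <= n (S k))%nat -> (1 <= j <= n (S k))%nat -> i <> j ->
  ~ (exists x, lo (w ++ [i]) < x < hi (w ++ [i]) /\ lo (w ++ [j]) < x < hi (w ++ [j])).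
Proof.
  destruct Hmoran as (_ & _ & _ & Hch). intros Hw.
  apply (Hch (S k) w ltac:(lia)). now rewrite Nat.sub_1_r.
Qed.

Lemma moran_hi k w : word_in n k w -> hi w = lo w + delta k.
Proof.
  revert w. induction k as [|k IH]; intros w Hw.
  - apply word_in_0_nil in Hw as ->. destruct Hmoran as (_ & -> & -> & _).
    unfold basic_length. simpl. ring.
  - destruct (word_in_S_inv _ _ _ Hw) as (w' & i & -> & Hw' & Hi).
    destruct (moran_child k w' i Hw' Hi) as (_ & _ & Hlen).
    rewrite (IH w' Hw') in Hlen. rewrite <- Nat.add_1_r in Hlen |- *.
    rewrite basic_length_add. simpl. lra.
Qed.

Lemma moran_nested k j w : word_in n (k + j) w ->
  lo (firstn k w) <= lo w /\ hi w <= hi (firstn k w).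
Proof.
  revert w. induction j as [|j IH]; intros w Hw.
  - rewrite firstn_all2 by (rewrite (word_in_length _ _ _ Hw); lia). lra.
  - rewrite Nat.add_succ_r in Hw.
    destruct (word_in_S_inv _ _ _ Hw) as (w' & i & -> & Hw' & Hi).
    destruct (moran_child _ _ _ Hw' Hi) as (Hlo & Hhi & _).
    rewrite firstn_snoc by (rewrite (word_in_length _ _ _ Hw'); lia).
    destruct (IH w' Hw'). lra.
Qed.

Lemma moran_disjoint k w w' : word_in n k w -> word_in n k w' -> w <> w' ->
  hi w <= lo w' \/ hi w' <= lo w.
Proof.
  revert w w'. induction k as [|k IH]; intros w w' Hw Hw' Hne.
  - apply word_in_0_nil in Hw, Hw'. congruence.
  - destruct (word_in_S_inv _ _ _ Hw) as (u & i & -> & Hu & Hi).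
    destruct (word_in_S_inv _ _ _ Hw') as (u' & i' & -> & Hu' & Hi').
    destruct (list_eq_dec Nat.eq_dec u u') as [<-|Hne'].
    + pose proof (basic_length_pos (S k)).
      apply disjoint_open_intervals.
      * rewrite (moran_hi (S k) (u ++ [i])); [lra | now apply word_in_snoc].
      * rewrite (moran_hi (S k) (u ++ [i'])); [lra | now apply word_in_snoc].
      * apply (moran_children_disjoint k); trivial. congruence.
    + destruct (moran_child _ _ _ Hu Hi) as (E1 & E2 & _).
      destruct (moran_child _ _ _ Hu' Hi') as (E3 & E4 & _).
      destruct (IH u u' Hu Hu' Hne'); lra.
Qed.

Lemma moran_separated k w w' : word_in n k w -> word_in n k w' -> w <> w' ->
  separated (delta k) (lo w) (lo w').
Proof.
  intros Hw Hw' Hne. unfold separated.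
  rewrite <- (moran_hi k w Hw), <- (moran_hi k w' Hw'). now apply (moran_disjoint k).
Qed.

Lemma moran_repeat_nested k w m d : word_in n k w ->
  lo (w ++ repeat 1%nat m) <= lo (w ++ repeat 1%nat (m + d)) /\
  hi (w ++ repeat 1%nat (m + d)) <= hi (w ++ repeat 1%nat m).
Proof.
  intros Hw. induction d as [|d IH].
  - rewrite Nat.add_0_r. lra.
  - rewrite Nat.add_succ_r, repeat_S_snoc, app_assoc.
    assert (Hi : (1 <= 1 <= n (S (k + (m + d))))%nat) by (specialize (Hn (S (k + (m + d)))); lia).
    destruct (moran_child _ _ _ (word_in_repeat_1 n k w (m + d) Hn Hw) Hi) as (E1 & E2 & _).
    lra.
Qed.

Lemma moran_set_meets_interval k w : word_in n k w ->
  exists y, moran_set n lo hi y /\ lo w <= y <= hi w.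
Proof.
  intros Hw. set (u := fun m => w ++ repeat 1%nat m).
  assert (Hlohi : forall m m', lo (u m) <= hi (u m')).
  { intros m m'. set (m2 := Nat.max m m').
    destruct (moran_repeat_nested k w m (m2 - m) Hw) as [E1 _].
    destruct (moran_repeat_nested k w m' (m2 - m') Hw) as [_ E2].
    replace (m + (m2 - m))%nat with m2 in E1 by lia.
    replace (m' + (m2 - m'))%nat with m2 in E2 by lia.
    destruct Hmoran as (Hle & _). specialize (Hle (u m2)). unfold u in *. lra. }
  destruct (completeness (fun y => exists m, y = lo (u m))) as [y [Hub Hlub]].
  { exists (hi (u 0%nat)). intros y [m ->]. apply Hlohi. }
  { exists (lo (u 0%nat)), 0%nat. reflexivity. }
  assert (Hy : forall m, lo (u m) <= y <= hi (u m)).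
  { intros m. split; [apply Hub; now exists m|]. apply Hlub. intros z [m' ->]. apply Hlohi. }
  assert (Hu0 : u 0%nat = w) by apply app_nil_r.
  exists y. split.
  - intros k' Hk'. destruct (Nat.le_gt_cases k' k) as [Hle|Hgt].
    + assert (Hw' : word_in n (k' + (k - k')) w) by now replace (k' + (k - k'))%nat with k by lia.
      exists (firstn k' w). split; [exact (word_in_firstn _ _ _ _ Hw')|].
      destruct (moran_nested _ _ _ Hw'). specialize (Hy 0%nat). rewrite Hu0 in Hy. lra.
    + exists (u (k' - k)%nat). split; [|apply Hy].
      replace k' with (k + (k' - k))%nat at 1 by lia. now apply word_in_repeat_1.
  - specialize (Hy 0%nat). now rewrite Hu0 in Hy.
Qed.

Definition meets (w : list nat) (A : R -> Prop) : Prop := exists y, lo w <= y <= hi w /\ A y.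

Lemma length_meets_ball_le_2 k z rho Q : 2 * rho < delta k -> NoDup Q ->
  (forall v, In v Q -> word_in n k v /\ meets v (cball z rho)) -> (length Q <= 2)%nat.
Proof.
  intros Hrho HQ HQw. apply NoDup_length_le_2; [exact HQ|].
  intros v1 v2 v3 I1 I2 I3 D12 D13 D23.
  destruct (HQw v1 I1) as (W1 & y1 & A1 & B1).
  destruct (HQw v2 I2) as (W2 & y2 & A2 & B2).
  destruct (HQw v3 I3) as (W3 & y3 & A3 & B3).
  rewrite (moran_hi k _ W1) in A1. rewrite (moran_hi k _ W2) in A2. rewrite (moran_hi k _ W3) in A3.
  apply (three_separated_not_in_ball (lo v1) (lo v2) (lo v3) y1 y2 y3 z (delta k) rho);
    auto using moran_separated.
Qed.

Lemma length_meets_ball_le_3 k z rho Q : rho < delta k -> NoDup Q ->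
  (forall v, In v Q -> word_in n k v /\ meets v (cball z rho)) -> (length Q <= 3)%nat.
Proof.
  intros Hrho HQ HQw. apply NoDup_length_le_3; [exact HQ|].
  intros v1 v2 v3 v4 I1 I2 I3 I4 D12 D13 D14 D23 D24 D34.
  destruct (HQw v1 I1) as (W1 & y1 & A1 & B1).
  destruct (HQw v2 I2) as (W2 & y2 & A2 & B2).
  destruct (HQw v3 I3) as (W3 & y3 & A3 & B3).
  destruct (HQw v4 I4) as (W4 & y4 & A4 & B4).
  rewrite (moran_hi k _ W1) in A1. rewrite (moran_hi k _ W2) in A2.
  rewrite (moran_hi k _ W3) in A3. rewrite (moran_hi k _ W4) in A4.
  apply (four_separated_not_in_ball (lo v1) (lo v2) (lo v3) (lo v4) y1 y2 y3 y4 z (delta k) rho);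
    auto using moran_separated.
Qed.

Variable E : R -> Prop.
Hypothesis HE : forall x, E x <-> moran_set n lo hi x.

Lemma covering_number_ge_prod_n k l w x r : word_in n k w -> lo w <= x <= hi w ->
  3 * r = delta (k + l) ->
  Rbar_le (INR (prod_n n k l) / 2) (covering_number r (fun y => cball x (delta k) y /\ E y)).
Proof.
  intros Hw Hx Hr. apply covering_number_ge. intros cs Hcs.
  enough (Hle : (prod_n n k l <= 2 * length cs)%nat)
    by (apply le_INR in Hle; rewrite mult_INR in Hle; simpl in Hle; lra).
  rewrite <- (length_descendants n w k l).
  apply (length_le_mul_of_cover (fun z v => meets v (cball z r))).
  - apply NoDup_descendants.
  - intros v Hv. destruct (in_descendants _ _ _ _ _ Hw Hv) as [Hv1 Hv2].
    destruct (moran_set_meets_interval _ _ Hv1) as (y & Hy & Hyv).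
    destruct (moran_nested _ _ _ Hv1) as [N1 N2]. rewrite Hv2 in N1, N2.
    rewrite (moran_hi k w Hw) in Hx, N2.
    destruct (Hcs y) as (z & Hz & Hzy).
    + split; [apply cball_iff; lra | now apply HE].
    + exists z. split; [exact Hz|]. now exists y.
  - intros z Q HQ HQP HQz. apply (length_meets_ball_le_2 (k + l) z r); [|exact HQ|].
    + pose proof (basic_length_pos (k + l)). lra.
    + intros v Hv. split; [|exact (HQz v Hv)].
      exact (proj1 (in_descendants _ _ _ _ _ Hw (HQP v Hv))).
Qed.

Lemma moran_ball_cover K j x R0 r : (1 <= K)%nat -> R0 < delta K -> delta (K + j) <= 2 * r ->
  exists cs, covered_by r (fun y => cball x R0 y /\ E y) cs /\
    (length cs <= 3 * prod_n n K j)%nat.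
Proof.
  intros HK HR0 Hr.
  set (hit := filter (fun w => if excluded_middle_informative (meets w (cball x R0))
    then true else false) (descendants n [] 0 K)).
  assert (Hhit : forall w, In w hit <-> word_in n K w /\ meets w (cball x R0)).
  { intros w. unfold hit. rewrite filter_In, in_descendants_nil.
    destruct (excluded_middle_informative _); intuition discriminate. }
  exists (flat_map (fun w => map (fun v => (lo v + hi v) / 2) (descendants n w K j)) hit).
  split.
  - intros y [Hy HEy]. apply HE in HEy. destruct (HEy (K + j)%nat ltac:(lia)) as (v & Hv & Hyv).
    destruct (moran_nested _ _ _ Hv) as [N1 N2].
    exists ((lo v + hi v) / 2). split.
    + apply in_flat_map. exists (firstn K v). split.
      * apply Hhit. split; [exact (word_in_firstn _ _ _ _ Hv)|]. exists y. split; [lra | exact Hy].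
      * apply in_map_iff. exists v. split; [reflexivity|]. now apply descendants_complete.
    + apply cball_iff. rewrite (moran_hi _ _ Hv) in Hyv |- *. lra.
  - rewrite (flat_map_length_const _ _ (prod_n n K j)).
    + apply Nat.mul_le_mono_r, (length_meets_ball_le_3 K x R0); [exact HR0| |apply Hhit].
      apply NoDup_filter, NoDup_descendants.
    + intros w _. now rewrite length_map, length_descendants.
Qed.

(** * The two inequalities *)

Lemma inv_prod_c_eq k l : / prod_c c k l = delta k / delta (k + l).
Proof.
  rewrite basic_length_add. pose proof (basic_length_pos k). pose proof (prod_c_pos k l).
  field. lra.
Qed.

Lemma prod_n_window_le L s K j r R0 : 0 <= s ->
  (forall k l, (1 <= k)%nat -> (L <= l)%nat -> ratio n c k l < s) ->
  0 < r -> r < R0 -> delta (S K) <= R0 -> r < delta (K + j) ->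
  INR (prod_n n K (S j)) <= INR (M ^ (L + 2)) * Rpower (R0 / r) s.
Proof.
  intros Hs HL Hr HrR0 HK Hj.
  assert (HRr : 1 <= Rpower (R0 / r) s).
  { rewrite <- (Rpower_O (R0 / r)) by (apply Rdiv_lt_0_compat; lra).
    apply Rle_Rpower; [apply Rcomplements.Rle_div_r; lra | exact Hs]. }
  pose proof (HM (S K) ltac:(lia)) as HnK. apply le_INR in HnK.
  destruct j as [|l].
  - rewrite prod_n_1. pose proof (pos_INR (M ^ (L + 2))).
    apply Rle_trans with (INR (M ^ (L + 2))); [|nra].
    apply (Rle_trans _ _ _ HnK), le_INR. rewrite <- (Nat.pow_1_r M) at 1.
    apply Nat.pow_le_mono_r; [pose proof M_ge_1|]; lia.
  - (* The outer factors n_{K+1} and n_{K+l+2} are absorbed by M; the window in between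
       is controlled by [R0 / r]. *)
    assert (Hsplit : prod_n n K (S (S l)) = (n (S K) * (prod_n n (S K) l * n (S K + S l)))%nat).
    { change (S (S l)) with (1 + S l)%nat. now rewrite prod_n_add, prod_n_1, Nat.add_1_r. }
    rewrite Hsplit.
    pose proof (HM (S K + S l)%nat ltac:(lia)) as HnKl. apply le_INR in HnKl.
    assert (Hwin : INR (prod_n n (S K) l) <= INR (M ^ L) * Rpower (R0 / r) s).
    { apply (Rle_trans _ _ _ (prod_n_le_of_ratio_eventually_lt (S K) L s Hs
        (fun l' => HL (S K) l' ltac:(lia)) l)).
      apply Rmult_le_compat_l; [apply pos_INR|]. apply Rle_Rpower_l; [exact Hs|].
      rewrite inv_prod_c_eq. pose proof (basic_length_pos (S K)).
      replace (S K + l)%nat with (K + S l)%nat by lia.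
      split; [apply Rdiv_lt_0_compat; lra|]. apply Rmult_le_compat; try lra.
      - apply Rlt_le, Rinv_0_lt_compat. lra.
      - apply Rinv_le_contravar; lra. }
    rewrite !mult_INR, pow_INR, pow_add. rewrite pow_INR in Hwin.
    pose proof (pos_INR (n (S K))). pose proof (pos_INR (n (S K + S l))).
    pose proof (pos_INR (prod_n n (S K) l)).
    pose proof (pos_INR M). pose proof (pow_le (INR M) L (pos_INR M)).
    pose proof (Rpower_pos (R0 / r) s).
    apply Rle_trans with (INR M * (INR M ^ L * Rpower (R0 / r) s * INR M)); [|simpl; lra].
    apply Rmult_le_compat; [lra | apply Rmult_le_pos; lra | exact HnK |].
    apply Rmult_le_compat; lra.
Qed.

Lemma assouad_bound_of_ratio_lt L s : 0 <= s ->
  (forall k l, (1 <= k)%nat -> (L <= l)%nat -> ratio n c k l < s) ->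
  assouad_bound E (delta 1) (3 * INR (M ^ (L + 2))) s.
Proof.
  intros Hs HL r R0 x Hr HrR0 HR0 _.
  destruct (basic_length_bracket 1 R0) as (K0 & HK & HK1); [lra | exact HR0|].
  set (K := (1 + K0)%nat) in *.
  destruct (basic_length_bracket K r) as (j & Hj & Hj1); [exact Hr | lra|].
  destruct (moran_ball_cover K (S j) x R0 r) as (cs & Hcs & Hlen);
    [unfold K; lia | exact HK | lra|].
  eapply Rbar_le_trans; [apply covering_number_le, Hcs|]. simpl.
  apply le_INR in Hlen. rewrite mult_INR in Hlen. simpl (INR 3) in Hlen.
  pose proof (prod_n_window_le L s K j r R0 Hs HL Hr HrR0 HK1 Hj). lra.
Qed.

Lemma prod_n_le_of_assouad_bound b0 C s k l : assouad_bound E b0 C s -> delta k < b0 ->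
  INR (prod_n n k l) <= 2 * C * Rpower 3 s * Rpower (/ prod_c c k l) s.
Proof.
  intros Hbound Hk.
  assert (Hw : word_in n k (repeat 1%nat k))
    by exact (word_in_repeat_1 n 0 [] k Hn (word_in_nil n)).
  destruct (moran_set_meets_interval k _ Hw) as (x & Hx & Hxw).
  pose proof (basic_length_pos k). pose proof (basic_length_add k l).
  pose proof (prod_c_pos k l). pose proof (prod_c_le_1 k l).
  set (r := delta (k + l) / 3).
  assert (Hr : 0 < r) by (unfold r; nra).
  assert (HrR0 : r < delta k) by (unfold r; nra).
  pose proof (Rbar_le_trans _ _ _
    (covering_number_ge_prod_n k l _ x r Hw Hxw ltac:(unfold r; lra))
    (Hbound r (delta k) x Hr HrR0 Hk (proj2 (HE x) Hx))) as Hcount.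
  simpl in Hcount.
  replace (delta k / r) with (3 * / prod_c c k l) in Hcount
    by (unfold r; rewrite basic_length_add; field; lra).
  rewrite <- Rpower_mult_distr in Hcount by (try apply Rinv_0_lt_compat; lra). lra.
Qed.

Lemma prod_n_eventually_le_of_assouad_bound b0 C s : 0 <= s -> 0 < b0 -> 0 < C ->
  assouad_bound E b0 C s ->
  exists K C', 0 < C' /\ forall k l, (1 <= k)%nat -> (K <= l)%nat ->
    INR (prod_n n k l) <= C' * Rpower (/ prod_c c k l) s.
Proof.
  intros Hs Hb0 HC Hbound.
  destruct (basic_length_eventually_le (b0 / 2)) as [K HK]; [lra|].
  pose proof (Rpower_pos 3 s). pose proof (le_INR _ _ (pow_M_ge_1 K)) as HMK.
  exists K, (INR (M ^ K) * (2 * C * Rpower 3 s)). split.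
  { simpl in HMK. apply Rmult_lt_0_compat; [lra|]. apply Rmult_lt_0_compat; lra. }
  intros k l Hk Hl.
  (* Starting the window at level max k K costs at most the factor M^K, since k' - k <= K. *)
  set (k' := Nat.max k K). set (d := (k' - k)%nat). set (l' := (l - d)%nat).
  assert (Hsplit : l = (d + l')%nat) by (unfold l', d, k'; lia).
  assert (Hk' : (k + d)%nat = k') by (unfold d, k'; lia).
  assert (Hdelta : delta k' < b0).
  { replace k' with (K + (k' - K))%nat by (unfold k'; lia).
    pose proof (basic_length_le_add K (k' - K)). lra. }
  pose proof (prod_n_le_of_assouad_bound b0 C s k' l' Hbound Hdelta) as Hprod.
  pose proof (prod_c_pos k d). pose proof (prod_c_pos k' l'). pose proof (prod_c_le_1 k d).
  assert (Hq : Rpower (/ prod_c c k' l') s <= Rpower (/ prod_c c k l) s).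
  { apply Rle_Rpower_l; [exact Hs|]. rewrite Hsplit, prod_c_add, Hk'.
    split; [apply Rinv_0_lt_compat; lra|]. apply Rinv_le_contravar; nra. }
  assert (Hd : INR (prod_n n k d) <= INR (M ^ K)).
  { apply le_INR, (Nat.le_trans _ _ _ (prod_n_le_pow k d)), Nat.pow_le_mono_r;
      [pose proof M_ge_1 | unfold d, k']; lia. }
  replace (prod_n n k l) with (prod_n n k d * prod_n n k' l')%nat
    by (now rewrite Hsplit, prod_n_add, Hk').
  rewrite mult_INR.
  pose proof (pos_INR (prod_n n k d)). pose proof (pos_INR (prod_n n k' l')).
  pose proof (Rpower_pos (/ prod_c c k' l') s).
  apply Rle_trans with (INR (M ^ K) * (2 * C * Rpower 3 s * Rpower (/ prod_c c k' l') s)).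
  - apply Rmult_le_compat; lra.
  - rewrite (Rmult_assoc (INR (M ^ K))). apply Rmult_le_compat_l; [lra|].
    apply Rmult_le_compat_l; [|exact Hq]. apply Rmult_le_pos; lra.
Qed.

Lemma assouad_dim_le_moran_formula : Rbar_le (assouad_dim E) (moran_formula n c).
Proof.
  rewrite assouad_dim_admissible. apply Glb_Rbar_le_of_forall_lt. intros s Hs.
  destruct (ratio_lt_of_moran_formula_lt n c s Hs) as [L HL].
  assert (Hs0 : 0 <= s)
    by (pose proof (ratio_nonneg 1 L); specialize (HL 1%nat L (le_n 1) (le_n L)); lra).
  split; [exact Hs0|]. exists (delta 1), (3 * INR (M ^ (L + 2))).
  split; [apply basic_length_pos|]. split; [|now apply assouad_bound_of_ratio_lt].
  pose proof (le_INR _ _ (pow_M_ge_1 (L + 2))). simpl in *. lra.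
Qed.

Lemma moran_formula_le_assouad_dim : Rbar_le (moran_formula n c) (assouad_dim E).
Proof.
  rewrite assouad_dim_admissible. apply le_Glb_Rbar. intros s (Hs & b0 & C & Hb0 & HC & Hbound).
  destruct (prod_n_eventually_le_of_assouad_bound b0 C s Hs Hb0 HC Hbound)
    as (K & C' & HC' & Hprod).
  apply moran_formula_le_of_eventually. intros eps Heps.
  exact (ratio_eventually_le_of_prod_n_le K C' s eps HC' Heps Hprod).
Qed.

End HomogeneousMoran.

Theorem theorem1 (n : nat -> nat) (c : nat -> R) (a b : R) (E : R -> Prop) :
  (forall k, (1 <= k)%nat -> (2 <= n k)%nat) ->
  (forall k, (1 <= k)%nat -> 0 < c k) ->
  (forall k, (1 <= k)%nat -> INR (n k) * c k < 1) ->
  a < b ->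
  in_moran_class a b n c E ->
  (exists M : nat, forall k, (1 <= k)%nat -> (n k <= M)%nat) ->
  assouad_dim E = moran_formula n c.
Proof.
  intros Hn2 Hc Hnc Hab (lo & hi & Hmoran & HE) (M & HM).
  assert (Hn : forall k, (1 <= k)%nat -> (1 <= n k)%nat)
    by (intros k Hk; specialize (Hn2 k Hk); lia).
  assert (Hc_half : forall k, (1 <= k)%nat -> c k <= / 2)
    by (intros k Hk; exact (c_le_half _ _ (Hn2 k Hk) (Hc k Hk) (Hnc k Hk))).
  apply Rbar_le_antisym.
  - exact (assouad_dim_le_moran_formula n c M Hn HM Hc Hc_half a b lo hi Hmoran Hab E HE).
  - exact (moran_formula_le_assouad_dim n c M Hn HM Hc Hc_half a b lo hi Hmoran Hab E HE).
Qed.
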